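(* The GP 2 program is-connected terminates on any GP 2 host graph in which every node is marked grey and is not a root and every edge is unmarked.
   Context: GP 2 semantics. Host graphs are finite directed graphs (parallel edges and loops allowed) whose nodes and edges carry labels (lists of integers and strings) and marks (nodes: unmarked, red, green, blue, grey; edges: unmarked, red, green, blue, dashed); some nodes are roots. A rule is applied by finding an injective label- and mark-compatible match of its left-hand side (mark ''any'' matches every mark; roots match roots) satisfying the dangling condition, then changing the matched items as prescribed by the right-hand side. Commands: a rule set call applies one applicable rule, failing if none applies; $P;Q$ sequencing; $P!$ iterates $P$ until it fails (break exits the loop); ''try $C$ then $P$ else $Q$'' runs $C$ and continues with $P$ on its result if it succeeded, else runs $Q$ on the original graph; ''if $C$ then $P$ else $Q$'' runs $C$ on a copy then $P$ or $Q$ on the original; fail causes failure. The program is-connected (labels unchanged by all rules): Main = try init then (DFS!; Check); DFS = FORWARD!; try back else break; FORWARD = next_edge; {move, ignore}; Check = if match then fail. Rule edges between nodes 1 and 2 match host edges in either direction. - init: a grey non-root node becomes a blue root. - match: a grey node; no change. - next_edge: blue root 1, node 2 of any mark, unmarked edge between them; edge becomes red. - ignore: blue root 1, blue node 2, red edge between; edge becomes blue. - move: blue root 1, grey node 2, red edge between; node 1 becomes a blue non-root, node 2 a blue root, edge dashed. - back: blue non-root 1, blue root 2, dashed edge between; node 1 becomes a root, node 2 a non-root (both blue), edge blue. *)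

From mathcomp Require Import all_boot.
From Stdlib Require BinNums String.

Set Implicit Arguments.
Unset Strict Implicit.
Unset Printing Implicit Defensive.

Inductive atom := AInt of BinNums.Z | AStr of String.string.
Definition label := seq atom.

Inductive nmark := NUnmarked | NRed | NGreen | NBlue | NGrey.
Inductive emark := EUnmarked | ERed | EGreen | EBlue | EDashed.

(* ---------- Host graphs ----------
   Nodes are 0 .. size g_nodes - 1; edges are identified by their position
   in g_edges (so parallel edges and loops are allowed). *)
Record hnode := HNode { hn_label : label; hn_mark : nmark; hn_root : bool }.
Record hedge := HEdge { he_src : nat; he_tgt : nat; he_label : label; he_mark : emark }.
Record graph := Graph { g_nodes : seq hnode; g_edges : seq hedge }.

Definition wf_graph (G : graph) : Prop :=
  forall e, List.In e (g_edges G) ->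
    he_src e < size (g_nodes G) /\ he_tgt e < size (g_nodes G).

Definition dflt_hnode := HNode [::] NUnmarked false.
Definition dflt_hedge := HEdge 0 0 [::] EUnmarked.

(* ---------- Rules (no creation/deletion; labels are variables, unchanged) ----------
   rule node: LHS mark pattern (None = "any"), LHS rootedness,
   RHS mark (None = unchanged, used together with "any"), RHS rootedness.
   rule edge: between rule nodes re_src and re_tgt, matched in either
   direction, with LHS and RHS marks. *)
Record rnode := RNode { rn_lmark : option nmark; rn_lroot : bool;
                        rn_rmark : option nmark; rn_rroot : bool }.
Record redge := REdge { re_src : nat; re_tgt : nat; re_lmark : emark; re_rmark : emark }.
Record rule := Rule { r_nodes : seq rnode; r_edges : seq redge }.

Definition dflt_rnode := RNode None false None false.
Definition dflt_redge := REdge 0 0 EUnmarked EUnmarked.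

Definition npat_ok (p : option nmark) (m : nmark) : Prop :=
  match p with None => True | Some m' => m' = m end.

(* A root rule node
   must match a root host node; a non-root rule node matches any node.
   (The dangling condition holds trivially since no rule deletes a node.) *)
Definition is_match (r : rule) (G : graph) (mv me : seq nat) : Prop :=
  [/\ size mv = size (r_nodes r), uniq mv &
      (forall i, i < size mv ->
         let rn := nth dflt_rnode (r_nodes r) i in
         let v := nth dflt_hnode (g_nodes G) (nth 0 mv i) in
         [/\ nth 0 mv i < size (g_nodes G),
             npat_ok (rn_lmark rn) (hn_mark v) &
             (rn_lroot rn -> hn_root v)])] /\
  [/\ size me = size (r_edges r), uniq me &
      (forall k, k < size me ->
         let re := nth dflt_redge (r_edges r) k in
         let e := nth dflt_hedge (g_edges G) (nth 0 me k) in
         [/\ nth 0 me k < size (g_edges G),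
             he_mark e = re_lmark re &
             (he_src e = nth 0 mv (re_src re) /\ he_tgt e = nth 0 mv (re_tgt re)) \/
             (he_src e = nth 0 mv (re_tgt re) /\ he_tgt e = nth 0 mv (re_src re))])].

Definition upd_node (rn : rnode) (v : hnode) : hnode :=
  HNode (hn_label v)
        (match rn_rmark rn with None => hn_mark v | Some m => m end)
        (if rn_lroot rn == rn_rroot rn then hn_root v else rn_rroot rn).

Definition upd_edge (re : redge) (e : hedge) : hedge :=
  HEdge (he_src e) (he_tgt e) (he_label e) (re_rmark re).

Definition rewrite_nodes (r : rule) (G : graph) (mv : seq nat) : seq hnode :=
  foldl (fun ns p => set_nth dflt_hnode ns p.2 (upd_node p.1 (nth dflt_hnode ns p.2)))
        (g_nodes G) (zip (r_nodes r) mv).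

Definition rewrite_edges (r : rule) (G : graph) (me : seq nat) : seq hedge :=
  foldl (fun es p => set_nth dflt_hedge es p.2 (upd_edge p.1 (nth dflt_hedge es p.2)))
        (g_edges G) (zip (r_edges r) me).

Definition apply_rule (r : rule) (G H : graph) : Prop :=
  exists mv me, is_match r G mv me /\
    H = Graph (rewrite_nodes r G mv) (rewrite_edges r G me).

Definition applicable (r : rule) (G : graph) : Prop := exists H, apply_rule r G H.

Inductive cmd :=
  | Call of seq rule
  | Seq of cmd & cmd
  | Loop of cmd
  | Try of cmd & cmd & cmd
  | If of cmd & cmd & cmd
  | Break
  | Fail
  | Skip.

(* Configurations; conditions of try/if and loop bodies are executed inside
   the configuration, so every computation step is a visible transition. *)
Inductive conf :=
  | CRun of cmd & graph
  | CFin of graph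
  | CFail
  | CBreak of graph
  | CSeq of conf & cmd                    (* running P in P;Q *)
  | CLoop of conf & graph & cmd           (* running body, graph at start of iteration, body *)
  | CTry of conf & graph & cmd & cmd      (* running condition, original graph, then, else *)
  | CIf of conf & graph & cmd & cmd.

Inductive step : conf -> conf -> Prop :=
  | s_call_ok rs r G H : List.In r rs -> apply_rule r G H -> step (CRun (Call rs) G) (CFin H)
  | s_call_fail rs G : (forall r, List.In r rs -> ~ applicable r G) -> step (CRun (Call rs) G) CFail
  | s_seq P Q G : step (CRun (Seq P Q) G) (CSeq (CRun P G) Q)
  | s_loop P G : step (CRun (Loop P) G) (CLoop (CRun P G) G P)
  | s_try C P Q G : step (CRun (Try C P Q) G) (CTry (CRun C G) G P Q)
  | s_if C P Q G : step (CRun (If C P Q) G) (CIf (CRun C G) G P Q)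
  | s_break G : step (CRun Break G) (CBreak G)
  | s_fail G : step (CRun Fail G) CFail
  | s_skip G : step (CRun Skip G) (CFin G)
  | s_seq_in c c' Q : step c c' -> step (CSeq c Q) (CSeq c' Q)
  | s_seq_fin H Q : step (CSeq (CFin H) Q) (CRun Q H)
  | s_seq_fail Q : step (CSeq CFail Q) CFail
  | s_seq_break H Q : step (CSeq (CBreak H) Q) (CBreak H)
  | s_loop_in c c' G P : step c c' -> step (CLoop c G P) (CLoop c' G P)
  | s_loop_fin H G P : step (CLoop (CFin H) G P) (CLoop (CRun P H) H P)
  | s_loop_fail G P : step (CLoop CFail G P) (CFin G)
  | s_loop_break H G P : step (CLoop (CBreak H) G P) (CFin H)
  | s_try_in c c' G P Q : step c c' -> step (CTry c G P Q) (CTry c' G P Q)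
  | s_try_fin H G P Q : step (CTry (CFin H) G P Q) (CRun P H)
  | s_try_fail G P Q : step (CTry CFail G P Q) (CRun Q G)
  | s_if_in c c' G P Q : step c c' -> step (CIf c G P Q) (CIf c' G P Q)
  | s_if_fin H G P Q : step (CIf (CFin H) G P Q) (CRun P G)
  | s_if_fail G P Q : step (CIf CFail G P Q) (CRun Q G).

Definition terminates (P : cmd) (G : graph) : Prop :=
  ~ exists f : nat -> conf, f 0 = CRun P G /\ forall n, step (f n) (f n.+1).

Definition r_init := Rule [:: RNode (Some NGrey) false (Some NBlue) true] [::].
Definition r_match := Rule [:: RNode (Some NGrey) false (Some NGrey) false] [::].
Definition r_next_edge :=
  Rule [:: RNode (Some NBlue) true (Some NBlue) true; RNode None false None false]
       [:: REdge 0 1 EUnmarked ERed].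
Definition r_ignore :=
  Rule [:: RNode (Some NBlue) true (Some NBlue) true; RNode (Some NBlue) false (Some NBlue) false]
       [:: REdge 0 1 ERed EBlue].
Definition r_move :=
  Rule [:: RNode (Some NBlue) true (Some NBlue) false; RNode (Some NGrey) false (Some NBlue) true]
       [:: REdge 0 1 ERed EDashed].
Definition r_back :=
  Rule [:: RNode (Some NBlue) false (Some NBlue) true; RNode (Some NBlue) true (Some NBlue) false]
       [:: REdge 0 1 EDashed EBlue].

Definition FORWARD := Seq (Call [:: r_next_edge]) (Call [:: r_move; r_ignore]).
Definition DFS := Seq (Loop FORWARD) (Try (Call [:: r_back]) Skip Break).
Definition Check := If (Call [:: r_match]) Fail Skip.
Definition is_connected := Try (Call [:: r_init]) (Seq (Loop DFS) Check) Skip.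

(* Give unmarked edges weight 2, dashed edges weight 1 and all other edges
   weight 0.  Applying next_edge lowers the total weight by 2, move raises it
   by 1, ignore keeps it and back lowers it by 1.  Hence every iteration of
   FORWARD, and every iteration of DFS that does not break, strictly lowers
   the weight, which bounds both loops; all other commands are loop-free.
   The argument works on every host graph. *)

From mathcomp Require Import all_boot.
From mathcomp Require Import zify.

Set Implicit Arguments.
Unset Strict Implicit.

Definition running (c : conf) : Prop :=
  match c with CFin _ | CBreak _ | CFail => False | _ => True end.

(* [running c] stops [halts_step] from applying vacuously to the terminal
   configurations, which have no successors and must meet the postconditions. *)
Inductive halts (Pf Pb : graph -> Prop) : conf -> Prop :=
  | halts_fin H : Pf H -> halts Pf Pb (CFin H)
  | halts_break H : Pb H -> halts Pf Pb (CBreak H)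
  | halts_fail : halts Pf Pb CFail
  | halts_step c : running c -> (forall c', step c c' -> halts Pf Pb c') ->
      halts Pf Pb c.

Ltac no_step := match goal with
  | H : step (CFin _) _ |- _ => inversion H
  | H : step (CBreak _) _ |- _ => inversion H
  | H : step CFail _ |- _ => inversion H
  | H : running _ |- _ => solve [inversion H]
  end.

Lemma halts_no_infinite_run Pf Pb c : halts Pf Pb c ->
  ~ exists f : nat -> conf, f 0 = c /\ forall n, step (f n) (f n.+1).
Proof.
elim=> [H _|H _||c0 _ _ IH] [f [f0 Hs]];
  try by have := Hs 0; rewrite f0 => Hs0; inversion Hs0.
apply: (IH (f 1)); first by rewrite -f0.
by exists (fun n => f n.+1).
Qed.

Lemma halts_weaken Pf Pb Pf' Pb' c : halts Pf Pb c ->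
  (forall H, Pf H -> Pf' H) -> (forall H, Pb H -> Pb' H) -> halts Pf' Pb' c.
Proof.
move=> Hc HF HB; elim: Hc => [H /HF|H /HB||c0 nt _ IH].
- exact: halts_fin.
- exact: halts_break.
- exact: halts_fail.
- exact: halts_step.
Qed.

Lemma halts_CSeq Pf Pb Qf Qb c Q : halts Pf Pb c ->
  (forall H, Pf H -> halts Qf Qb (CRun Q H)) -> (forall H, Pb H -> Qb H) ->
  halts Qf Qb (CSeq c Q).
Proof.
move=> Hc HF HB; elim: Hc => [H h|H h||c0 nt _ IH];
  apply: halts_step => // c' Hs; inversion Hs; subst; try no_step.
- exact: HF.
- exact/halts_break/HB.
- exact: halts_fail.
- exact: IH.
Qed.

Lemma halts_Seq Pf Pb Qf Qb P Q G : halts Pf Pb (CRun P G) ->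
  (forall H, Pf H -> halts Qf Qb (CRun Q H)) -> (forall H, Pb H -> Qb H) ->
  halts Qf Qb (CRun (Seq P Q) G).
Proof.
move=> hP hQ hB; apply: halts_step => // c' Hs; inversion Hs; subst.
exact: halts_CSeq hP hQ hB.
Qed.

Lemma halts_CTry Cf Cb Qf Qb c G P Q : halts Cf Cb c ->
  (forall H, Cf H -> halts Qf Qb (CRun P H)) -> halts Qf Qb (CRun Q G) ->
  halts Qf Qb (CTry c G P Q).
Proof.
move=> Hc HP HQ; elim: Hc => [H h|H h||c0 nt _ IH];
  apply: halts_step => // c' Hs; inversion Hs; subst; try no_step.
- exact: HP.
- exact: HQ.
- exact: IH.
Qed.

Lemma halts_Try Cf Cb Qf Qb C G P Q : halts Cf Cb (CRun C G) ->
  (forall H, Cf H -> halts Qf Qb (CRun P H)) -> halts Qf Qb (CRun Q G) ->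
  halts Qf Qb (CRun (Try C P Q) G).
Proof.
move=> hC hP hQ; apply: halts_step => // c' Hs; inversion Hs; subst.
exact: halts_CTry hC hP hQ.
Qed.

Lemma halts_CIf Cf Cb Qf Qb c G P Q : halts Cf Cb c ->
  halts Qf Qb (CRun P G) -> halts Qf Qb (CRun Q G) ->
  halts Qf Qb (CIf c G P Q).
Proof.
move=> Hc HP HQ; elim: Hc => [H h|H h||c0 nt _ IH];
  apply: halts_step => // c' Hs; inversion Hs; subst; try no_step.
- exact: HP.
- exact: HQ.
- exact: IH.
Qed.

Lemma halts_If Cf Cb Qf Qb C G P Q : halts Cf Cb (CRun C G) ->
  halts Qf Qb (CRun P G) -> halts Qf Qb (CRun Q G) ->
  halts Qf Qb (CRun (If C P Q) G).
Proof.
move=> hC hP hQ; apply: halts_step => // c' Hs; inversion Hs; subst.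
exact: halts_CIf hC hP hQ.
Qed.

Lemma halts_Call Pf Pb rs G :
  (forall r H, List.In r rs -> apply_rule r G H -> Pf H) ->
  halts Pf Pb (CRun (Call rs) G).
Proof.
move=> hrs; apply: halts_step => // c' Hs; inversion Hs; subst.
- exact/halts_fin/(hrs r).
- exact: halts_fail.
Qed.

Lemma halts_Call1 Pf Pb r G :
  (forall H, apply_rule r G H -> Pf H) -> halts Pf Pb (CRun (Call [:: r]) G).
Proof. by move=> hr; apply: halts_Call => _ H [<-|[]]; apply: hr. Qed.

Lemma halts_Skip Pf Pb G : Pf G -> halts Pf Pb (CRun Skip G).
Proof.
by move=> hG; apply: halts_step => // c' Hs; inversion Hs; apply: halts_fin.
Qed.

Lemma halts_Fail Pf Pb G : halts Pf Pb (CRun Fail G).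
Proof. by apply: halts_step => // c' Hs; inversion Hs; apply: halts_fail. Qed.

Lemma halts_Break Pf Pb G : Pb G -> halts Pf Pb (CRun Break G).
Proof.
by move=> hG; apply: halts_step => // c' Hs; inversion Hs; apply: halts_break.
Qed.

Section LoopVariant.

Variables (inv : graph -> Prop) (measure : graph -> nat) (P : cmd).
Variables (Bb Qf Qb : graph -> Prop).

Hypothesis body_decreases : forall G, inv G ->
  halts (fun H => inv H /\ measure H < measure G) Bb (CRun P G).
Hypothesis inv_exit : forall G, inv G -> Qf G.
Hypothesis break_exit : forall H, Bb H -> Qf H.

Lemma halts_CLoop n G c : measure G < n -> inv G ->
  halts (fun H => inv H /\ measure H < measure G) Bb c ->
  halts Qf Qb (CLoop c G P).
Proof.
elim: n G c => // n IHn G c ltGn invG Hc.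
elim: Hc => [H [invH ltHG]|H h||c0 nt _ IH];
  apply: halts_step => // c' Hs; inversion Hs; subst; try no_step.
- by apply: IHn => //; [lia | apply: body_decreases].
- exact/halts_fin/break_exit.
- exact/halts_fin/inv_exit.
- exact: IH.
Qed.

Lemma halts_Loop G : inv G -> halts Qf Qb (CRun (Loop P) G).
Proof.
move=> invG; apply: halts_step => // c' Hs; inversion Hs; subst.
by apply: (@halts_CLoop (measure G).+1) => //; apply: body_decreases.
Qed.

End LoopVariant.

Definition emark_weight (m : emark) : nat :=
  match m with EUnmarked => 2 | EDashed => 1 | _ => 0 end.

Definition weight (G : graph) : nat :=
  sumn [seq emark_weight (he_mark e) | e <- g_edges G].

Lemma sumn_map_set_nth (T : Type) (x0 : T) (f : T -> nat) s k x : k < size s ->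
  sumn (map f (set_nth x0 s k x)) + f (nth x0 s k) = sumn (map f s) + f x.
Proof.
by elim: s k => [|y s IH] [|k] //= k_lt; [lia | have := IH k k_lt; lia].
Qed.

Lemma weight_apply_rule1 r re G H : r_edges r = [:: re] -> apply_rule r G H ->
  weight H + emark_weight (re_lmark re) = weight G + emark_weight (re_rmark re).
Proof.
move=> r_re [mv [me [[_ [size_me _ me_ok]] ->]]].
rewrite r_re /= in size_me.
case: me size_me me_ok => [|k [|]] //= _ me_ok.
have [k_lt k_mark _] := me_ok 0 erefl; rewrite r_re /= in k_mark.
rewrite /weight /rewrite_edges /= r_re /= -k_mark.
exact: sumn_map_set_nth.
Qed.

Lemma weight_FORWARD G :
  halts (fun H => weight H < weight G) (fun _ => False) (CRun FORWARD G).
Proof.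
apply: (@halts_Seq (fun H => weight H + 2 = weight G) (fun _ => False)) => //.
  apply: halts_Call1 => H next_edge_GH.
  have /= := weight_apply_rule1 (erefl (r_edges r_next_edge)) next_edge_GH.
  lia.
move=> H1 h1; apply: halts_Call => r H [<-|[<-|[]]] r_H1H.
- by have /= := weight_apply_rule1 (erefl (r_edges r_move)) r_H1H; lia.
- by have /= := weight_apply_rule1 (erefl (r_edges r_ignore)) r_H1H; lia.
Qed.

Lemma weight_Loop_FORWARD G :
  halts (fun H => weight H <= weight G) (fun _ => False)
        (CRun (Loop FORWARD) G).
Proof.
apply: (halts_Loop (inv := fun H => weight H <= weight G) (measure := weight)
  (Bb := fun _ => False)) => // G1 h1.
by apply: halts_weaken (weight_FORWARD G1) _ _ => // H hH; split; lia.
Qed.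

Lemma weight_DFS G :
  halts (fun H => weight H < weight G) (fun _ => True) (CRun DFS G).
Proof.
apply: (@halts_Seq (fun H => weight H <= weight G) (fun _ => False)) => //.
  exact: weight_Loop_FORWARD.
move=> H1 h1.
apply: (@halts_Try (fun H => weight H < weight H1) (fun _ => False)).
- apply: halts_Call1 => H back_H1H.
  by have /= := weight_apply_rule1 (erefl (r_edges r_back)) back_H1H; lia.
- by move=> H2 h2; apply: halts_Skip; lia.
- exact: halts_Break.
Qed.

Lemma halts_is_connected G :
  halts (fun _ => True) (fun _ => True) (CRun is_connected G).
Proof.
apply: (@halts_Try (fun _ => True) (fun _ => True)); last exact: halts_Skip.
  exact: halts_Call.
move=> H _; apply: (@halts_Seq (fun _ => True) (fun _ => True)) => //.
  apply: (halts_Loop (inv := fun _ => True) (measure := weight)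
    (Bb := fun _ => True)) => // G1 _.
  exact: halts_weaken (weight_DFS G1) _ _.
move=> H2 _; apply: (@halts_If (fun _ => True) (fun _ => True)).
- exact: halts_Call.
- exact: halts_Fail.
- exact: halts_Skip.
Qed.

Theorem mainTheorem3 (G : graph) :
  wf_graph G ->
  (forall v, List.In v (g_nodes G) -> hn_mark v = NGrey /\ hn_root v = false) ->
  (forall e, List.In e (g_edges G) -> he_mark e = EUnmarked) ->
  terminates is_connected G.
Proof.
by move=> _ _ _; apply: halts_no_infinite_run (halts_is_connected G).
Qed.
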